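(* Let $K$ be a field of characteristic zero and let $F^{(y)}:K[x]\to K[x,y]$ be a $K$-linear operator. Suppose $(p_n(x))_{n\ge0}$ and $(p'_n(x))_{n\ge0}$ are two sequences of polynomials in $K[x]$ with $\deg p_n=\deg p'_n=n$ such that for all $n\ge 0$ $$F^{(y)}p_n(x)=\sum_{k=0}^np_k(x)p_{n-k}(y)\quad\text{and}\quad F^{(y)}p'_n(x)=\sum_{k=0}^np'_k(x)p'_{n-k}(y).$$ Let $\epsilon,\epsilon':K[x]\to K$ be the linear maps defined by $\epsilon p_n(x)=\delta_{n0}$ and $\epsilon' p'_n(x)=\delta_{n0}$. Then $\epsilon=\epsilon'$. *)

From HB Require Import structures.
From mathcomp Require Export all_boot all_order all_algebra.
Set Implicit Arguments. Unset Strict Implicit. Unset Printing Implicit Defensive.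
Export GRing.Theory.
Local Open Scope ring_scope.

(* K[x,y] is modelled as {poly {poly K}}: polynomials in the outer variable y
   whose coefficients are polynomials in x. *)

Definition in_x (K : fieldType) (p : {poly K}) : {poly {poly K}} := p%:P.
Definition in_y (K : fieldType) (p : {poly K}) : {poly {poly K}} := map_poly polyC p.

Definition conv_xy (K : fieldType) (p : nat -> {poly K}) (n : nat) : {poly {poly K}} :=
  \sum_(0 <= k < n.+1) in_x (p k) * in_y (p (n - k)%N).

(* K-linearity of F : K[x] -> K[x,y] (scalars act as constants). *)
Definition Klinear_xy (K : fieldType) (F : {poly K} -> {poly {poly K}}) : Prop :=
  forall (a : K) (p q : {poly K}), F (a *: p + q) = (a%:P)%:P * F p + F q.

Definition Klinear_form (K : fieldType) (e : {poly K} -> K) : Prop :=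
  forall (a : K) (p q : {poly K}), e (a *: p + q) = a * e p + e q.

(** The usual uniqueness argument for the counit of a coalgebra, with [F] as
    coproduct.  Contracting the [y]-variable of [F q] against [eps'] returns
    [q]: both sides are linear in [q] and agree on the basis [p'_n], because
    [eps'] kills every term of [sum_k p'_k(x) p'_(n-k)(y)] but [k = n].
    Symmetrically, contracting the [x]-variable against [eps] returns [q],
    using the basis [p_n].  Contracting both variables of [F q] in either
    order then gives [eps q = eps' q]. *)

From HB Require Import structures.
From mathcomp Require Import polyXY.

Set Implicit Arguments.
Unset Strict Implicit.
Unset Printing Implicit Defensive.

Local Open Scope ring_scope.

Section GradedBasis.
Variables (K : fieldType) (V : lmodType K) (p : nat -> {poly K}).
Hypothesis p_size : forall n, size (p n) = n.+1.

Lemma linear_eq_on_graded (f g : {poly K} -> V) :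
  linear f -> linear g -> (forall n, f (p n) = g (p n)) -> f =1 g.
Proof.
move=> f_lin g_lin fg_p.
have lin0 (h : {poly K} -> V) : linear h -> h 0 = 0.
  by move=> h_lin; have := h_lin (-1) 0 0; rewrite !scaleN1r oppr0 addr0 addNr.
suff fg_small n (q : {poly K}) : (size q <= n)%N -> f q = g q.
  by move=> q; exact: fg_small.
elim: n q => [|n IHn] q size_q.
  by move: size_q; rewrite leqn0 size_poly_eq0 => /eqP ->; rewrite !lin0.
have pn_neq0 : p n != 0 by rewrite -size_poly_eq0 p_size.
have size_div : (size (q %/ p n)%R <= 1)%N.
  by rewrite size_divp // p_size leq_subLR addn1.
rewrite (divp_eq q (p n)) (size1_polyC size_div) mul_polyC f_lin g_lin fg_p IHn //.
by rewrite -ltnS -(p_size n) ltn_modp.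
Qed.

End GradedBasis.

Lemma poly_xy_expansion (K : fieldType) (P : {poly {poly K}}) :
  P = \sum_(i < size P) in_x P`_i * in_y 'X^i.
Proof.
rewrite -{1}[P]coefK poly_def; apply: eq_bigr => i _.
by rewrite /in_x /in_y map_polyXn mul_polyC.
Qed.

Lemma swapXY_xy (K : fieldType) (a b : {poly K}) :
  swapXY (in_x a * in_y b) = in_x b * in_y a.
Proof. by rewrite rmorphM /= swapXY_polyC swapXY_map_polyC mulrC. Qed.

(* [contract_x e] applies [e] to the [x]-variable; the remaining variable [y]
   becomes the variable of the result. *)
Definition contract_x (K : fieldType) (e : {poly K} -> K) (P : {poly {poly K}}) :
  {poly K} := map_poly e P.
Definition contract_y (K : fieldType) (e : {poly K} -> K) (P : {poly {poly K}}) :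
  {poly K} := contract_x e (swapXY P).

Section Contraction.
Variables (K : fieldType) (e : {poly K} -> K).
Hypothesis e_lin : Klinear_form e.
HB.instance Definition _ := GRing.isLinear.Build K {poly K} K ( *%R) e e_lin.

Lemma contract_x_sum I (r : seq I) (P : I -> {poly {poly K}}) :
  contract_x e (\sum_(i <- r) P i) = \sum_(i <- r) contract_x e (P i).
Proof. exact: raddf_sum. Qed.

Lemma contract_y_sum I (r : seq I) (P : I -> {poly {poly K}}) :
  contract_y e (\sum_(i <- r) P i) = \sum_(i <- r) contract_y e (P i).
Proof. by rewrite /contract_y raddf_sum contract_x_sum. Qed.

Lemma contract_x_linear a P Q :
  contract_x e ((a%:P)%:P * P + Q) = a *: contract_x e P + contract_x e Q.
Proof.
by apply/polyP => i; rewrite coefD coefZ !coef_map /= coefD coefCM mul_polyC e_lin.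
Qed.

Lemma contract_y_linear a P Q :
  contract_y e ((a%:P)%:P * P + Q) = a *: contract_y e P + contract_y e Q.
Proof.
by rewrite /contract_y raddfD /= rmorphM /= swapXY_polyC map_polyC contract_x_linear.
Qed.

Lemma contract_x_xy a b : contract_x e (in_x a * in_y b) = e a *: b.
Proof.
apply/polyP => i; rewrite coef_map coefZ /= coefCM coef_map /= mulrC mul_polyC.
by rewrite scalarZ mulrC.
Qed.

Lemma contract_y_xy a b : contract_y e (in_x a * in_y b) = e b *: a.
Proof. by rewrite /contract_y swapXY_xy contract_x_xy. Qed.

Variable p : nat -> {poly K}.
Hypothesis e_p : forall n, e (p n) = (n == 0)%:R.

Lemma contract_x_conv n : contract_x e (conv_xy p n) = p n.
Proof.
rewrite contract_x_sum big_nat_recl // contract_x_xy e_p scale1r subn0.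
by rewrite big1 ?addr0 // => k _; rewrite contract_x_xy e_p scale0r.
Qed.

Lemma contract_y_conv n : contract_y e (conv_xy p n) = p n.
Proof.
rewrite contract_y_sum big_nat_recr //= contract_y_xy subnn e_p scale1r.
rewrite big1_seq ?add0r // => k /andP[_]; rewrite mem_index_iota => /andP[_ lt_kn].
by rewrite contract_y_xy e_p subn_eq0 leqNgt lt_kn scale0r.
Qed.

End Contraction.

Section TwoForms.
Variables (K : fieldType) (e e' : {poly K} -> K).
Hypotheses (e_lin : Klinear_form e) (e'_lin : Klinear_form e').
HB.instance Definition _ := GRing.isLinear.Build K {poly K} K ( *%R) e e_lin.
HB.instance Definition _ := GRing.isLinear.Build K {poly K} K ( *%R) e' e'_lin.

Lemma contract_xyC P : e (contract_y e' P) = e' (contract_x e P).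
Proof.
rewrite (poly_xy_expansion P) contract_y_sum // contract_x_sum // !linear_sum.
by apply: eq_bigr => i _; rewrite contract_y_xy // contract_x_xy // !scalarZ mulrC.
Qed.

End TwoForms.

Theorem corollary1 (K : fieldType) (Kchar0 : [pchar K] =i pred0)
  (F : {poly K} -> {poly {poly K}}) (F_lin : Klinear_xy F)
  (p p' : nat -> {poly K})
  (p_deg : forall n, size (p n) = n.+1) (p'_deg : forall n, size (p' n) = n.+1)
  (Fp : forall n, F (p n) = conv_xy p n) (Fp' : forall n, F (p' n) = conv_xy p' n)
  (eps eps' : {poly K} -> K) (eps_lin : Klinear_form eps) (eps'_lin : Klinear_form eps')
  (eps_p : forall n, eps (p n) = (n == 0%N)%:R)
  (eps'_p' : forall n, eps' (p' n) = (n == 0%N)%:R) :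
  forall q : {poly K}, eps q = eps' q.
Proof.
have contract_y_F : forall q, contract_y eps' (F q) = q.
  apply: (linear_eq_on_graded p'_deg (g := idfun)) => // [a q r | n].
    by rewrite F_lin contract_y_linear.
  by rewrite Fp' contract_y_conv.
have contract_x_F : forall q, contract_x eps (F q) = q.
  apply: (linear_eq_on_graded p_deg (g := idfun)) => // [a q r | n].
    by rewrite F_lin contract_x_linear.
  by rewrite Fp contract_x_conv.
by move=> q; rewrite -{1}[q]contract_y_F contract_xyC // contract_x_F.
Qed.
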